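(* Let $t$ be a positive integer with $5\nmid t$. Then for every integer $n\ge0$, $$b^{2}_{5,4t}(4n+3)\equiv 0\pmod{10}.$$
   Context: For integers $r\ge1$ write $f_r=\prod_{i\ge1}(1-q^{ri})$. For coprime positive integers $\ell,m$ and a positive integer $k$, $b^{k}_{\ell,m}(n)$ denotes the number of $k$-colored partitions of $n$ into parts not divisible by $\ell$ or by $m$, i.e. $\sum_{n\ge0} b^{k}_{\ell,m}(n)q^n=\dfrac{f_\ell^k f_m^k}{f_1^k f_{\ell m}^k}$. Thus $\sum b^2_{5,4t}(n)q^n=\dfrac{f_5^2f_{4t}^2}{f_1^2f_{20t}^2}$. *)

From mathcomp Require Import all_boot.
Set Implicit Arguments. Unset Strict Implicit. Unset Printing Implicit Defensive.

(* Number of ways to write n as sum_{p in L} a_p * p with a_p >= 0, where the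
   entries of L are treated as distinct "part types" (a part size j appearing
   k times in L represents the k colours of the part j). *)
Fixpoint npart_list (L : seq nat) (n : nat) : nat :=
  match L with
  | [::] => (n == 0)%N
  | j :: L' =>
      if j == 0 then 0 (* never used: part sizes are positive *)
      else sumn [seq npart_list L' (n - a * j) | a <- iota 0 (n %/ j).+1]
  end.

Definition colored_parts (k l m n : nat) : seq nat :=
  flatten [seq nseq k j | j <- iota 1 n & ~~ (l %| j) && ~~ (m %| j)].

Definition b (k l m n : nat) : nat := npart_list (colored_parts k l m n) n.

From mathcomp Require Import all_boot all_algebra.
From mathcomp Require Import ring zify.
Set Implicit Arguments. Unset Strict Implicit. Unset Printing Implicit Defensive.
Import GRing.Theory.
Local Open Scope ring_scope.

(* The generating function of b^2_{l,m} is H^2 with H = prod (1 - q^j)^-1 over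
   the admissible parts j, so its odd coefficients are even.  Modulo 5, split
   f_1 = A C Q into the products of the (1 - q^j) over the j divisible by 5,
   over the j divisible by m = 4t but not by 5, and over the admissible j.
   Since A = f_1(q^5) = f_1^5 mod 5 and H Q = 1, we get H^2 = C^2 f_1^8 mod 5,
   where C is a series in q^4.  Gauss's identity f_1^2 = f_2 phi(-q), with
   phi(-q) = sum_k (-1)^k q^(k^2), and f_1(q) f_1(-q) f_4 = f_2^3, which yields
   phi(-q^2)^2 = phi(q) phi(-q), give f_1^8 = f_4^2 phi(-q)^5 phi(q).  Writing
   phi(-q) = a - b and phi(q) = a + b, where a lives on exponents 0 mod 4 and
   b on exponents 1 mod 4, no monomial of (a - b)^5 (a + b) reaches the
   exponents 3 mod 4.  Power series are polynomials modulo a power of X, and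
   Gauss's identity is the limit of the finite q-binomial theorem for
   prod_(i < 2n) (q^(2n-1) - q^(2i)). *)

Section PowerCongruence.
Variable R : comNzRingType.
Implicit Types (y a b c d u : R).

Definition eqmod y m a b := exists r, a - b = r * y ^+ m.

Lemma eqmod_refl y m a : eqmod y m a a.
Proof. by exists 0; rewrite subrr mul0r. Qed.

Lemma eqmod_sym y m a b : eqmod y m a b -> eqmod y m b a.
Proof. by case=> r h; exists (- r); rewrite mulNr -h opprB. Qed.

Lemma eqmod_trans y m a b c : eqmod y m a b -> eqmod y m b c -> eqmod y m a c.
Proof.
by case=> r h [s h']; exists (r + s); rewrite mulrDl -h -h' addrA subrK.
Qed.

Lemma eqmodD y m a b c d :
  eqmod y m a b -> eqmod y m c d -> eqmod y m (a + c) (b + d).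
Proof. by case=> r h [s h']; exists (r + s); rewrite mulrDl -h -h'; ring. Qed.

Lemma eqmodM y m a b c d :
  eqmod y m a b -> eqmod y m c d -> eqmod y m (a * c) (b * d).
Proof.
case=> r h [s h']; exists (r * c + b * s).
have -> : a * c - b * d = (a - b) * c + b * (c - d) by ring.
by rewrite h h'; ring.
Qed.

Lemma eqmodMl y m a b c : eqmod y m a b -> eqmod y m (c * a) (c * b).
Proof. exact/eqmodM/eqmod_refl. Qed.

Lemma eqmodMr y m a b c : eqmod y m a b -> eqmod y m (a * c) (b * c).
Proof. by move/eqmodM; apply; apply: eqmod_refl. Qed.

Lemma eqmodX y m a b k : eqmod y m a b -> eqmod y m (a ^+ k) (b ^+ k).
Proof.
move=> h; elim: k => [|k IH]; first exact: eqmod_refl.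
by rewrite !exprS; apply: eqmodM.
Qed.

Lemma eqmod_sum y m (I : Type) (r : seq I) (P : pred I) (F G : I -> R) :
  (forall i, P i -> eqmod y m (F i) (G i)) ->
  eqmod y m (\sum_(i <- r | P i) F i) (\sum_(i <- r | P i) G i).
Proof.
move=> h; elim/big_rec2: _ => [|i a b Pi hab]; first exact: eqmod_refl.
exact: eqmodD (h i Pi) hab.
Qed.

Lemma eqmod_prod1 y m (I : Type) (r : seq I) (P : pred I) (F : I -> R) :
  (forall i, P i -> eqmod y m (F i) 1) -> eqmod y m (\prod_(i <- r | P i) F i) 1.
Proof.
move=> h; elim/big_rec: _ => [|i a Pi ha]; first exact: eqmod_refl.
by rewrite -[1](mulr1 1); apply: eqmodM (h i Pi) ha.
Qed.

Lemma eqmod_leq y m m' a b : (m' <= m)%N -> eqmod y m a b -> eqmod y m' a b.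
Proof.
by move=> le [r h]; exists (r * y ^+ (m - m')); rewrite h -mulrA -exprD subnK.
Qed.

Lemma eqmod_powl y k m a b : eqmod (y ^+ k) m a b -> eqmod y (k * m) a b.
Proof. by case=> r h; exists r; rewrite h exprM. Qed.

Lemma eqmod_oppl y m a b : eqmod (- y) m a b -> eqmod y m a b.
Proof. by case=> r h; exists (r * (-1) ^+ m); rewrite h -mulrA -exprNn. Qed.

Lemma eqmod_mulX y m k a b :
  eqmod y m a b -> eqmod y (m + k) (a * y ^+ k) (b * y ^+ k).
Proof. by case=> r h; exists r; rewrite -mulrBl h exprD mulrA. Qed.

Lemma eqmod_1subX y m k : (m <= k)%N -> eqmod y m (1 - y ^+ k) 1.
Proof.
by move=> le; exists (- y ^+ (k - m)); rewrite -{1}(subnK le) exprD; ring.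
Qed.

Lemma eqmod_inverse y m u : eqmod y 1 u 1 -> exists v, eqmod y m (u * v) 1.
Proof.
case=> s h; set z := - s * y.
have -> : u = 1 - z by rewrite /z -[u](subrK 1) h expr1; ring.
exists (\sum_(i < m) z ^+ i); rewrite -opprB mulNr -subrX1 opprB.
by exists (- (- s) ^+ m); rewrite /z exprMn; ring.
Qed.

Lemma eqmod_cancel y m u a b :
  eqmod y 1 u 1 -> eqmod y m (u * a) (u * b) -> eqmod y m a b.
Proof.
case/(eqmod_inverse m) => v hv h.
have ea := eqmodMr a hv; have eb := eqmodMr b hv; rewrite !mul1r in ea eb.
apply: eqmod_trans (eqmod_sym ea) (eqmod_trans _ eb).
by move: (eqmodMl v h); rewrite !mulrA ![v * u]mulrC.
Qed.

End PowerCongruence.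

Section EulerProducts.
Variable R : comNzRingType.
Implicit Types x : R.

Definition euler x K := \prod_(i < K) (1 - x ^+ i.+1).
Definition euler_odd x K := \prod_(i < K) (1 - x ^+ i.*2.+1).

Lemma euler_iota x K : euler x K = \prod_(j <- iota 1 K) (1 - x ^+ j).
Proof.
have -> : iota 1 K = index_iota 1 K.+1 by rewrite /index_iota subSS subn0.
by rewrite big_add1 big_mkord.
Qed.

Lemma eulerS x K : euler x K.+1 = euler x K * (1 - x ^+ K.+1).
Proof. by rewrite /euler big_ord_recr. Qed.

Lemma euler_unit x K : eqmod x 1 (euler x K) 1.
Proof. by apply: eqmod_prod1 => i _; apply: eqmod_1subX. Qed.

Lemma euler_eqmod x m k l : (m <= k)%N -> (m <= l)%N ->
  eqmod x m.+1 (euler x k) (euler x l).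
Proof.
wlog le_kl : k l / (k <= l)%N.
  move=> IH hk hl; case: (leqP k l) => [le|/ltnW le]; first exact: IH.
  exact/eqmod_sym/IH.
move=> hk _; rewrite /euler -(subnK le_kl) addnC big_split_ord /=.
rewrite -[X in eqmod _ _ X _]mulr1; apply/eqmodMl/eqmod_sym.
by apply: eqmod_prod1 => i _; apply: eqmod_1subX; lia.
Qed.

Lemma euler_double x K : euler x K.*2 = euler_odd x K * euler (x ^+ 2) K.
Proof.
elim: K => [|K IH]; first by rewrite /euler /euler_odd !big_ord0 mulr1.
rewrite /euler /euler_odd doubleS !big_ord_recr /=.
rewrite -/(euler x K.*2) -/(euler_odd x K) -/(euler (x ^+ 2) K) IH -!exprM.
have -> : (K.*2.+1.+1 = 2 * K.+1)%N by lia.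
ring.
Qed.

Lemma euler_oddN x K : euler_odd x K * euler_odd (- x) K = euler_odd (x ^+ 2) K.
Proof.
rewrite /euler_odd -big_split /=; apply: eq_bigr => i _.
rewrite exprNn -exprM -signr_odd /= odd_double /= expr1 mulN1r.
have -> : (2 * i.*2.+1 = i.*2.+1 + i.*2.+1)%N by lia.
by rewrite exprD; ring.
Qed.

Lemma euler_mul_eulerN x K :
  euler x K.*2 * euler (- x) K.*2 * euler (x ^+ 4) K
  = euler (x ^+ 2) K.*2 * euler (x ^+ 2) K ^+ 2.
Proof. by rewrite !euler_double sqrrN -!exprM -euler_oddN; ring. Qed.

End EulerProducts.

Section QBinomial.
Variable R : comNzRingType.
Implicit Types (p z : R).

Fixpoint qbin p m j : R :=
  match m, j with
  | 0, _ => (j == 0)%:R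
  | m'.+1, 0 => 1
  | m'.+1, j'.+1 => qbin p m' j'.+1 + p ^+ (m' - j') * qbin p m' j'
  end.

Lemma qbin0 p m : qbin p m 0 = 1.
Proof. by case: m. Qed.

Lemma qbin_small p m j : (m < j)%N -> qbin p m j = 0.
Proof.
elim: m j => [|m IH] [|j] //= lt.
by rewrite !IH ?mulr0 ?addr0 //; lia.
Qed.

Lemma qbinn p m : qbin p m m = 1.
Proof. by elim: m => [|m IH] //=; rewrite qbin_small // subnn mul1r IH add0r. Qed.

Lemma euler_qbin p m j : (j <= m)%N ->
  euler p j * euler p (m - j) * qbin p m j = euler p m.
Proof.
elim: m j => [|m IH] [|j] //=.
- by rewrite /euler !big_ord0 !mul1r.
- by rewrite /euler big_ord0 subn0 mul1r mulr1.
rewrite ltnS leq_eqVlt => /orP [/eqP ->|lt].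
  by rewrite qbin_small // !subnn qbinn add0r /euler big_ord0 !mulr1.
have Emj : euler p (m - j) = euler p (m - j.+1) * (1 - p ^+ (m - j)).
  have -> : (m - j = (m - j.+1).+1)%N by lia.
  exact: eulerS.
transitivity ((1 - p ^+ (m - j)) * (euler p j.+1 * euler p (m - j.+1) * qbin p m j.+1)
   + p ^+ (m - j) * (1 - p ^+ j.+1) * (euler p j * euler p (m - j) * qbin p m j)).
  by rewrite eulerS Emj; ring.
rewrite IH // IH ?(ltnW lt) // eulerS.
have -> : p ^+ m.+1 = p ^+ (m - j) * p ^+ j.+1 by rewrite -exprD; congr (_ ^+ _); lia.
ring.
Qed.

Lemma euler_qbin_eqmod p m j L k : (j <= m)%N ->
  (k <= j)%N -> (k <= m - j)%N -> (k <= L)%N ->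
  eqmod p k.+1 (euler p L * qbin p m j) 1.
Proof.
move=> jm hj hmj hL; apply: (eqmod_cancel (euler_unit p L)).
have toL i : (k <= i)%N -> eqmod p k.+1 (euler p i) (euler p L) by move/euler_eqmod; apply.
rewrite mulr1 mulrA; apply: eqmod_trans (toL m _); last by lia.
rewrite -(euler_qbin p jm); apply/eqmodMr/eqmodM; exact/eqmod_sym/toL.
Qed.

Definition qbin_term p z m j := (-1) ^+ j * p ^+ 'C(j, 2) * qbin p m j * z ^+ (m - j).

Lemma qbin_termS p z m j : (j <= m)%N ->
  qbin_term p z m.+1 j.+1 = z * qbin_term p z m j.+1 - p ^+ m * qbin_term p z m j.
Proof.
rewrite /qbin_term /= binS bin1 leq_eqVlt => /orP [/eqP ->|lt].
  by rewrite qbin_small // !subnn qbinn exprS exprD; ring.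
have -> : z ^+ (m - j) = z * z ^+ (m - j.+1) by rewrite -exprS; congr (_ ^+ _); lia.
have -> : p ^+ m = p ^+ (m - j) * p ^+ j by rewrite -exprD subnK // ltnW.
by rewrite exprS exprD; ring.
Qed.

Lemma prod_qbinomial p z m :
  \prod_(i < m) (z - p ^+ i) = \sum_(j < m.+1) qbin_term p z m j.
Proof.
elim: m => [|m IH]; first by rewrite big_ord0 big_ord1 /qbin_term !expr0 !mulr1.
rewrite big_ord_recr /= IH [RHS]big_ord_recl.
rewrite (eq_bigr _ (fun j _ => qbin_termS p z (ltnSE (ltn_ord j)))) sumrB -!mulr_sumr.
have top : qbin_term p z m m.+1 = 0 by rewrite /qbin_term qbin_small // mulr0 !mul0r.
have shift : \sum_(j < m.+1) qbin_term p z m j.+1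
             = \sum_(j < m.+1) qbin_term p z m j - qbin_term p z m 0.
  have recl : \sum_(j < m.+2) qbin_term p z m j
              = qbin_term p z m 0 + \sum_(j < m.+1) qbin_term p z m j.+1.
    by rewrite big_ord_recl.
  have recr : \sum_(j < m.+2) qbin_term p z m j = \sum_(j < m.+1) qbin_term p z m j.
    by rewrite big_ord_recr /= top addr0.
  by rewrite -recr recl addrC addKr.
have bottom : qbin_term p z m.+1 0 = z * qbin_term p z m 0.
  by rewrite /qbin_term !qbin0 !subn0 exprS; ring.
by rewrite shift bottom; ring.
Qed.

End QBinomial.

Lemma bin2_double k : ('C(k, 2) * 2 + k = k * k)%N.
Proof. by elim: k => [|k IH] //; rewrite binS bin1; nia. Qed.

Section GaussIdentity.
Variable R : comNzRingType.
Implicit Types x : R.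

Lemma prod_gauss x n :
  \prod_(i < n.*2) (x ^+ n.*2.-1 - (x ^+ 2) ^+ i)
  = (-1) ^+ n * x ^+ ('C(n, 2) * 2 + n * n.*2.-1) * euler_odd x n ^+ 2.
Proof.
have low : \prod_(i < n) (x ^+ n.*2.-1 - (x ^+ 2) ^+ i)
         = \prod_(i < n) (- x ^+ (i * 2) * (1 - x ^+ (rev_ord i).*2.+1)).
  apply: eq_bigr => i _; rewrite -exprM mulnC.
  have -> : (n.*2.-1 = i * 2 + (rev_ord i).*2.+1)%N by have := ltn_ord i; rewrite /=; lia.
  by rewrite exprD; ring.
have high : \prod_(i < n) (x ^+ n.*2.-1 - (x ^+ 2) ^+ (n + i))
          = \prod_(i < n) (x ^+ n.*2.-1 * (1 - x ^+ i.*2.+1)).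
  apply: eq_bigr => i _; rewrite -exprM.
  have -> : (2 * (n + i) = n.*2.-1 + i.*2.+1)%N by have := ltn_ord i; lia.
  by rewrite exprD; ring.
have rev : \prod_(i < n) (1 - x ^+ (rev_ord i).*2.+1) = euler_odd x n.
  by rewrite (reindex_inj rev_ord_inj); apply: eq_bigr => i _; rewrite rev_ordK.
rewrite -addnn big_split_ord /= addnn low high !big_split /= rev -/(euler_odd x n).
rewrite prodrN card_ord prodrXr prodr_const card_ord -big_distrl /= -bin2_sum big_mkord.
by rewrite exprD (mulnC n) !exprM; ring.
Qed.

(* Truncation of phi(-x) = sum_k (-1)^k x^(k^2) to |k| <= n, with k = j - n. *)
Definition theta x n := \sum_(j < n.*2.+1) (-1) ^+ (j + n) * x ^+ (`|j - n| ^ 2).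

End GaussIdentity.

Section GaussIdentityIdomain.
Variable R : idomainType.
Implicit Types x : R.

Lemma euler_odd_sqr x n : x != 0 ->
  euler_odd x n ^+ 2
  = \sum_(j < n.*2.+1) (-1) ^+ (j + n) * qbin (x ^+ 2) n.*2 j * x ^+ (`|j - n| ^ 2).
Proof.
move=> x0; set c := ('C(n, 2) * 2 + n * n.*2.-1)%N.
have := prod_qbinomial (x ^+ 2) (x ^+ n.*2.-1) n.*2; rewrite prod_gauss.
have -> : \sum_(j < n.*2.+1) qbin_term (x ^+ 2) (x ^+ n.*2.-1) n.*2 j
        = x ^+ c * \sum_(j < n.*2.+1) (-1) ^+ j * qbin (x ^+ 2) n.*2 j * x ^+ (`|j - n| ^ 2).
  rewrite mulr_sumr; apply: eq_bigr => j _; rewrite /qbin_term -!exprM.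
  have e : (2 * 'C(j, 2) + n.*2.-1 * (n.*2 - j) = `|j - n| ^ 2 + c)%N.
    by have := bin2_double j; have := bin2_double n; have := ltn_ord j; rewrite /c; nia.
  transitivity ((-1) ^+ j * qbin (x ^+ 2) n.*2 j * x ^+ (2 * 'C(j, 2) + n.*2.-1 * (n.*2 - j))).
    by rewrite exprD; ring.
  by rewrite e exprD; ring.
set S := \sum_(j < _) _ => h.
have : x ^+ c * ((-1) ^+ n * euler_odd x n ^+ 2) = x ^+ c * S by rewrite -h; ring.
move/(mulfI (expf_neq0 c x0)) => {}h.
rewrite -[LHS](signrMK n) h mulr_sumr; apply: eq_bigr => j _; rewrite exprD; ring.
Qed.

Lemma euler_sqr_eqmod x n L : x != 0 -> (n <= L)%N ->
  eqmod x n.*2.+1 (euler x n.*2 ^+ 2) (euler (x ^+ 2) L * theta x n).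
Proof.
move=> x0 nL; set p := x ^+ 2.
have term (j : 'I_n.*2.+1) : eqmod x n.*2.+1
    (euler p L * ((-1) ^+ (j + n) * qbin p n.*2 j * x ^+ (`|j - n| ^ 2)))
    ((-1) ^+ (j + n) * x ^+ (`|j - n| ^ 2)).
  set s := (-1) ^+ _; set d := `|j - n|%N.
  have -> : euler p L * (s * qbin p n.*2 j * x ^+ (d ^ 2))
          = s * (euler p L * qbin p n.*2 j * x ^+ (d ^ 2)) by ring.
  apply: eqmodMl.
  have hq : eqmod p (n - d).+1 (euler p L * qbin p n.*2 j) 1.
    by apply: euler_qbin_eqmod; have := ltn_ord j; lia.
  have := eqmod_mulX (d ^ 2) (eqmod_powl hq); rewrite mul1r.
  by apply: eqmod_leq; rewrite /d; nia.
have EnL : eqmod x n.*2.+1 (euler p n) (euler p L).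
  by apply: eqmod_leq (eqmod_powl (euler_eqmod p (leqnn n) nL)); lia.
rewrite euler_double exprMn; apply: eqmod_trans (eqmodMl _ (eqmodX 2 EnL)) _.
have -> : euler_odd x n ^+ 2 * euler p L ^+ 2
        = euler p L * (euler p L * euler_odd x n ^+ 2) by ring.
apply: eqmodMl; rewrite euler_odd_sqr // mulr_sumr.
by apply: eqmod_sum => j _; apply: term.
Qed.

End GaussIdentityIdomain.

Section EulerEighthPower.
Variables (R : idomainType) (x : R) (N : nat).
Hypothesis x0 : x != 0.

Let x2_neq0 : x ^+ 2 != 0. Proof. exact: expf_neq0. Qed.

Lemma euler_sqr_theta : eqmod x N.+1 (euler x N.*2 ^+ 2) (euler (x ^+ 2) N.*2 * theta x N).
Proof. by apply: (eqmod_leq _ (euler_sqr_eqmod x0 _)); lia. Qed.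

Lemma eulerN_sqr_theta :
  eqmod x N.+1 (euler (- x) N.*2 ^+ 2) (euler (x ^+ 2) N.*2 * theta (- x) N).
Proof.
have xN0 : - x != 0 by rewrite oppr_eq0.
have := euler_sqr_eqmod (n := N) (L := N.*2) xN0; rewrite sqrrN => h.
by apply/eqmod_oppl/(eqmod_leq _ (h _)); lia.
Qed.

Lemma euler2_sqr_theta :
  eqmod x N.+1 (euler (x ^+ 2) N.*2 ^+ 2) (euler (x ^+ 4) N * theta (x ^+ 2) N).
Proof.
have := euler_sqr_eqmod x2_neq0 (leqnn N); rewrite -exprM.
by move/eqmod_powl; apply: eqmod_leq; lia.
Qed.

Lemma euler_mul_eulerN_eqmod :
  eqmod x N.+1 (euler x N.*2 * euler (- x) N.*2 * euler (x ^+ 4) N) (euler (x ^+ 2) N.*2 ^+ 3).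
Proof.
rewrite euler_mul_eulerN exprS; apply/eqmodMl/eqmodX.
have := euler_eqmod (x ^+ 2) (leqnn N) (leq_addl N N); rewrite addnn.
by move/eqmod_powl; apply: eqmod_leq; lia.
Qed.

Lemma theta_sqr_eqmod :
  eqmod x N.+1 (theta (x ^+ 2) N ^+ 2) (theta x N * theta (- x) N).
Proof.
set E2 := euler (x ^+ 2) N.*2; set E4 := euler (x ^+ 4) N.
have unit : eqmod x 1 ((E4 * E2) ^+ 2) 1.
  rewrite -(expr1n _ 2) -[1](mulr1 1); apply/eqmodX/eqmodM.
    by have := euler_unit (x ^+ 4) N; move/eqmod_powl; apply: eqmod_leq.
  by have := euler_unit (x ^+ 2) N.*2; move/eqmod_powl; apply: eqmod_leq.
apply: (eqmod_cancel unit).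
have -> : (E4 * E2) ^+ 2 * theta (x ^+ 2) N ^+ 2 = (E4 * theta (x ^+ 2) N) ^+ 2 * E2 ^+ 2.
  by ring.
apply: eqmod_trans (eqmodMr _ (eqmodX 2 (eqmod_sym euler2_sqr_theta))) _.
have -> : (E2 ^+ 2) ^+ 2 * E2 ^+ 2 = (E2 ^+ 3) ^+ 2 by ring.
apply: eqmod_trans (eqmodX 2 (eqmod_sym euler_mul_eulerN_eqmod)) _.
have -> : (E4 * E2) ^+ 2 * (theta x N * theta (- x) N)
        = (E2 * theta x N) * (E2 * theta (- x) N) * E4 ^+ 2 by ring.
by rewrite !exprMn; apply/eqmodMr/eqmodM; [apply: euler_sqr_theta | apply: eulerN_sqr_theta].
Qed.

Lemma euler_pow8_eqmod :
  eqmod x N.+1 (euler x N.*2 ^+ 8) (euler (x ^+ 4) N ^+ 2 * theta x N ^+ 5 * theta (- x) N).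
Proof.
set E2 := euler (x ^+ 2) N.*2; set g2 := theta (x ^+ 2) N; set g := theta x N.
have -> : euler x N.*2 ^+ 8 = ((euler x N.*2 ^+ 2) ^+ 2) ^+ 2 by rewrite -!exprM.
apply: eqmod_trans (eqmodX 2 (eqmodX 2 euler_sqr_theta)) _.
have -> : ((E2 * g) ^+ 2) ^+ 2 = (E2 ^+ 2) ^+ 2 * g ^+ 4 by ring.
apply: eqmod_trans (eqmodMr _ (eqmodX 2 euler2_sqr_theta)) _.
have -> : (euler (x ^+ 4) N * g2) ^+ 2 * g ^+ 4 = euler (x ^+ 4) N ^+ 2 * g ^+ 4 * g2 ^+ 2.
  by ring.
have -> : euler (x ^+ 4) N ^+ 2 * g ^+ 5 * theta (- x) N
        = euler (x ^+ 4) N ^+ 2 * g ^+ 4 * (g * theta (- x) N) by ring.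
exact/eqmodMl/theta_sqr_eqmod.
Qed.

End EulerEighthPower.

Lemma sqrn_mod4 d : (d ^ 2 %% 4 = odd d)%N.
Proof.
move: (odd d) (d./2) (odd_double_half d) => b h <-.
have -> : ((b + h.*2) ^ 2 = b + 4 * (h * h + b * h))%N by case: b; rewrite /= -mul2n; ring.
by case: b; lia.
Qed.

Lemma odd_distn (m n : nat) : odd `|m - n|%N = odd (m + n).
Proof. lia. Qed.

Section ThetaParity.
Variable R : comNzRingType.
Implicit Types x : R.

Definition theta_even x n := \sum_(j < n.*2.+1 | ~~ odd `|j - n|) x ^+ (`|j - n| ^ 2).
Definition theta_odd x n := \sum_(j < n.*2.+1 | odd `|j - n|) x ^+ (`|j - n| ^ 2).

Lemma theta_split x n : theta x n = theta_even x n - theta_odd x n.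
Proof.
rewrite /theta /theta_even /theta_odd (bigID (fun j : 'I_n.*2.+1 => odd `|j - n|)) /=.
rewrite addrC -sumrN; congr (_ + _); apply: eq_bigr => j; rewrite -signr_odd -odd_distn.
  by move=> /negbTE ->; rewrite mul1r.
by move=> ->; rewrite mulN1r.
Qed.

Lemma thetaN_split x n : theta (- x) n = theta_even x n + theta_odd x n.
Proof.
rewrite /theta /theta_even /theta_odd (bigID (fun j : 'I_n.*2.+1 => odd `|j - n|)) /=.
rewrite addrC; congr (_ + _); apply: eq_bigr => j _.
all: by rewrite (exprNn x) mulrA -exprD -signr_odd oddD oddX /= -odd_distn addbb mul1r.
Qed.

End ThetaParity.

Section CoefficientClasses.
Variable R : comNzRingType.
Implicit Types p q : {poly R}.

Definition supp_mod (d r : nat) p := forall i, (i %% d != r)%N -> p`_i = 0.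

Lemma supp_modD d r p q : supp_mod d r p -> supp_mod d r q -> supp_mod d r (p + q).
Proof. by move=> hp hq i hi; rewrite coefD hp ?hq ?addr0. Qed.

Lemma supp_mod_sum d r (I : Type) (s : seq I) (P : pred I) (F : I -> {poly R}) :
  (forall i, P i -> supp_mod d r (F i)) -> supp_mod d r (\sum_(i <- s | P i) F i).
Proof.
move=> h; elim/big_rec: _ => [|i p Pi hp]; last exact: supp_modD (h i Pi) hp.
by move=> i _; rewrite coef0.
Qed.

Lemma supp_modM d r s p q :
  supp_mod d r p -> supp_mod d s q -> supp_mod d ((r + s) %% d) (p * q).
Proof.
move=> hp hq i hi; rewrite coefM big1 // => [[j lj]] _ /=.
have [hj|/hp ->] := eqVneq (j %% d)%N r; last by rewrite mul0r.
have [hij|/hq ->] := eqVneq ((i - j) %% d)%N s; last by rewrite mulr0.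
by move: hi; rewrite -hj -hij modnDm subnKC ?eqxx // -ltnS.
Qed.

Lemma supp_modXn d n : supp_mod d (n %% d) 'X^n.
Proof. by move=> i; rewrite coefXn; case: (eqVneq i n) => [->|]; rewrite ?eqxx. Qed.

Lemma supp_mod1 d : supp_mod d 0 1.
Proof. by rewrite -(mod0n d) -(expr0 'X); apply: supp_modXn. Qed.

Lemma supp_modX d r p k : supp_mod d r p -> supp_mod d ((r * k) %% d) (p ^+ k).
Proof.
move=> hp; elim: k => [|k IH]; first by rewrite muln0 mod0n expr0; apply: supp_mod1.
by rewrite exprSr mulnS addnC -modnDml; apply: supp_modM.
Qed.

Lemma supp_mod_prod d (I : Type) (s : seq I) (P : pred I) (F : I -> {poly R}) :
  (forall i, P i -> supp_mod d 0 (F i)) -> supp_mod d 0 (\prod_(i <- s | P i) F i).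
Proof.
move=> h; elim/big_rec: _ => [|i p Pi hp]; first exact: supp_mod1.
by rewrite -(mod0n d) -[0%N]/(0 + 0)%N; apply: supp_modM (h i Pi) hp.
Qed.

Lemma supp_mod_1subXn d j : (d %| j)%N -> supp_mod d 0 (1 - 'X^j).
Proof.
move=> dj i hi; rewrite coefB coef1 coefXn.
have -> : (i == 0%N) = false by apply: contraNF hi => /eqP ->; rewrite mod0n.
have -> : (i == j) = false by apply: contraNF hi => /eqP ->; exact: dj.
by rewrite subrr.
Qed.

Lemma supp_mod_theta_even n : supp_mod 4 0 (theta_even ('X : {poly R}) n).
Proof.
apply: supp_mod_sum => j /negbTE even_d.
by have := @supp_modXn 4 (`|j - n| ^ 2); rewrite sqrn_mod4 even_d.
Qed.

Lemma supp_mod_theta_odd n : supp_mod 4 1 (theta_odd ('X : {poly R}) n).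
Proof.
apply: supp_mod_sum => j odd_d.
by have := @supp_modXn 4 (`|j - n| ^ 2); rewrite sqrn_mod4 odd_d.
Qed.

Lemma supp_mod_euler4 N : supp_mod 4 0 (euler ('X ^+ 4 : {poly R}) N).
Proof. by apply: supp_mod_prod => i _; rewrite -exprM; apply/supp_mod_1subXn/dvdn_mulr. Qed.

(* (a - b)^5 (a + b) has no a^3 b^3 term. *)
Lemma coef_sextic_mod4 c a b i :
  supp_mod 4 0 c -> supp_mod 4 0 a -> supp_mod 4 1 b -> (i %% 4 = 3)%N ->
  (c * ((a - b) ^+ 5 * (a + b)))`_i = 0.
Proof.
move=> hc ha hb hi.
have term k l : (l %% 4 != 3)%N -> (c * (a ^+ k * b ^+ l))`_i = 0.
  move=> hl; apply: (supp_modM hc (supp_modM (supp_modX (k := k) ha) (supp_modX (k := l) hb))).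
  by rewrite hi mul0n mod0n !add0n mul1n !modn_mod eq_sym.
have -> : c * ((a - b) ^+ 5 * (a + b))
  = c * (a ^+ 6 * b ^+ 0) - (c * (a ^+ 5 * b ^+ 1)) *+ 4 + (c * (a ^+ 4 * b ^+ 2)) *+ 5
    - (c * (a ^+ 2 * b ^+ 4)) *+ 5 + (c * (a ^+ 1 * b ^+ 5)) *+ 4 - c * (a ^+ 0 * b ^+ 6).
  by ring.
by rewrite !(coefB, coefD, coefMn, coefMNn) !term // !(addr0, subr0).
Qed.

End CoefficientClasses.

Lemma eqmod_coef (R : comNzRingType) (p q : {poly R}) M n :
  eqmod 'X M p q -> (n < M)%N -> p`_n = q`_n.
Proof. by case=> r h nM; apply/eqP; rewrite -subr_eq0 -coefB h coefMXn nM. Qed.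

Lemma coef_euler_pow8_mod4 (R : idomainType) (c : {poly R}) N :
  supp_mod 4 0 c -> (N %% 4 = 3)%N -> (c * euler 'X N ^+ 8)`_N = 0.
Proof.
move=> hc hN; have X0 : ('X : {poly R}) != 0 by rewrite polyX_eq0.
have EN : eqmod ('X : {poly R}) N.+1 (euler 'X N) (euler 'X N.*2) by apply: euler_eqmod; lia.
rewrite (eqmod_coef (eqmodMl c (eqmodX 8 EN)) (ltnSn N)).
rewrite (eqmod_coef (eqmodMl c (euler_pow8_eqmod N X0)) (ltnSn N)).
rewrite theta_split thetaN_split.
set E4 := euler _ N ^+ 2; set a := theta_even _ N; set b := theta_odd _ N.
have -> : c * (E4 * (a - b) ^+ 5 * (a + b)) = c * E4 * ((a - b) ^+ 5 * (a + b)) by ring.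
apply: (coef_sextic_mod4 _ (supp_mod_theta_even _ _) (supp_mod_theta_odd _ _) hN).
exact: supp_modM hc (supp_modX (k := 2) (supp_mod_euler4 _ _)).
Qed.

Section PartitionGeneratingFunction.
Variable R : comNzRingType.

Definition geom (j M : nat) : {poly R} := \sum_(a < M) 'X^(a * j).

Lemma geom_eqmod j M : (0 < j)%N -> eqmod 'X M ((1 - 'X^j) * geom j M) 1.
Proof.
move=> j0; have -> : (1 - 'X^j) * geom j M = 1 - ('X^j) ^+ M.
  rewrite /geom (eq_bigr (fun a : 'I_M => ('X^j) ^+ a)) => [|a _]; last by rewrite -exprM mulnC.
  by rewrite -opprB mulNr -subrX1 opprB.
by rewrite -exprM; apply: eqmod_1subX; nia.
Qed.

Lemma coef_prod_geom (L : seq nat) n M : all (fun j => 0 < j)%N L -> (n < M)%N ->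
  (\prod_(j <- L) geom j M)`_n = (npart_list L n)%:R.
Proof.
elim: L n => [|j L IH] n; first by rewrite big_nil coef1.
case/andP=> j0 hL nM; rewrite big_cons.
have -> : npart_list (j :: L) n = sumn [seq npart_list L (n - a * j) | a <- iota 0 (n %/ j).+1].
  by rewrite /= (negbTE (lt0n_neq0 j0)).
rewrite sumnE big_map natr_sum /geom mulr_suml coef_sum.
transitivity (\sum_(a < M)
  (if (a < (n %/ j).+1)%N then (npart_list L (n - a * j))%:R else 0 : R)).
  apply: eq_bigr => a _; rewrite coefXnM ltnS leq_divRL //.
  by case: ltnP => h; rewrite ?IH //; lia.
rewrite -big_mkcond -(big_ord_widen M (fun a => (npart_list L (n - a * j))%:R : R)).
  have -> : iota 0 (n %/ j).+1 = index_iota 0 (n %/ j).+1 by rewrite /index_iota subn0.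
  by rewrite big_mkord.
by have := leq_div n j; lia.
Qed.

Lemma colored_parts_gt0 k l m n : all (fun j => 0 < j)%N (colored_parts k l m n).
Proof.
apply/allP => j /flatten_mapP [i].
by rewrite mem_filter mem_iota => /andP [_ /andP [i0 _]] /nseqP [-> _].
Qed.

Lemma b_coef k l m N : (b k l m N)%:R = (\prod_(j <- colored_parts k l m N) geom j N.+1)`_N.
Proof. by rewrite coef_prod_geom ?colored_parts_gt0. Qed.

Lemma prod_geom_colored2 l m N M :
  \prod_(j <- colored_parts 2 l m N) geom j M
  = (\prod_(j <- iota 1 N | ~~ (l %| j)%N && ~~ (m %| j)%N) geom j M) ^+ 2.
Proof.
rewrite /colored_parts big_flatten big_map big_filter -prodrXl.
by apply: eq_bigr => j _; rewrite /= !big_cons big_nil mulr1.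
Qed.

End PartitionGeneratingFunction.

Lemma big_iota_dvdn (T : Type) (idx : T) (op : Monoid.law idx) (F : nat -> T) d N :
  (0 < d)%N ->
  \big[op/idx]_(j <- iota 1 N | (d %| j)%N) F j = \big[op/idx]_(i <- iota 1 (N %/ d)) F (d * i)%N.
Proof.
move=> d0; elim: N => [|N IH]; first by rewrite div0n !big_nil.
rewrite -[N.+1]addn1 iotaD big_cat IH [iota (1 + N) 1]/= big_cons big_nil add1n addn1 divnS //.
have [dN|ndN] := boolP (d %| N.+1)%N; last by rewrite Monoid.mulm1.
rewrite add1n -[(N %/ d).+1]addn1 iotaD big_cat [iota (1 + _) 1]/= big_cons big_nil add1n.
by rewrite -(divnK dN) divnS // dN add1n mulnC.
Qed.

Lemma euler_pchar (R : comNzRingType) p (x : R) N :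
  p \in [pchar R] -> euler x N ^+ p = euler (x ^+ p) N.
Proof.
move=> pcharRp; rewrite /euler -prodrXl; apply: eq_bigr => i _.
have := pFrobenius_autB_comm pcharRp (commr_sym (commr1 (x ^+ i.+1))).
by rewrite !pFrobenius_autE expr1n -!exprM mulnC => ->.
Qed.

Section PrimeCharacteristic.
Variables (R : comNzRingType) (p : nat).
Hypothesis pcharRp : p \in [pchar R].

Let p_gt0 : (0 < p)%N. Proof. exact/prime_gt0/(pcharf_prime pcharRp). Qed.

Lemma prod_dvdn_eqmod N :
  eqmod ('X : {poly R}) N.+1 (\prod_(j <- iota 1 N | (p %| j)%N) (1 - 'X^j)) (euler 'X N ^+ p).
Proof.
have pcharPp : p \in [pchar {poly R}] by rewrite pchar_poly.
rewrite big_iota_dvdn // euler_pchar //.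
under eq_bigr do rewrite exprM.
rewrite -euler_iota; apply: (eqmod_leq _ (eqmod_powl (euler_eqmod _ (leqnn _) (leq_div N p)))).
by rewrite mulnC ltn_ceil.
Qed.

Lemma prod_geom_sqr_eqmod m N :
  eqmod ('X : {poly R}) N.+1
    ((\prod_(j <- iota 1 N | ~~ (p %| j)%N && ~~ (m %| j)%N) geom R j N.+1) ^+ 2)
    ((\prod_(j <- iota 1 N | ~~ (p %| j)%N && (m %| j)%N) (1 - 'X^j)) ^+ 2
       * euler 'X N ^+ (p.-1 * 2)).
Proof.
set H := \prod_(j <- _ | _) _; set C := \prod_(j <- _ | _) _.
set Q := \prod_(j <- iota 1 N | ~~ (p %| j)%N && ~~ (m %| j)%N) (1 - 'X^j : {poly R}).
set A := \prod_(j <- iota 1 N | (p %| j)%N) (1 - 'X^j : {poly R}).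
have HQ : eqmod 'X N.+1 (H * Q) 1.
  rewrite /H /Q -big_split big_seq_cond /=; apply: eqmod_prod1 => j /andP [jN _].
  by rewrite mulrC; apply: geom_eqmod; move: jN; rewrite mem_iota => /andP [].
have splitE : euler 'X N = A * (C * Q).
  rewrite euler_iota (bigID (fun j => p %| j)%N) /=.
  by rewrite [\prod_(j <- _ | ~~ _) _](bigID (fun j => m %| j)%N).
apply: (eqmod_cancel (u := euler 'X N ^+ 2)).
  by rewrite -(expr1n _ 2); apply/eqmodX/euler_unit.
have -> : euler 'X N ^+ 2 * H ^+ 2 = (H * Q) ^+ 2 * (C ^+ 2 * A ^+ 2) by rewrite splitE; ring.
have -> : euler 'X N ^+ 2 * (C ^+ 2 * euler 'X N ^+ (p.-1 * 2))
        = 1 ^+ 2 * (C ^+ 2 * (euler 'X N ^+ p) ^+ 2).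
  by rewrite expr1n mul1r mulrCA -exprD -exprM; congr (_ * _ ^+ _); lia.
exact: eqmodM (eqmodX 2 HQ) (eqmodMl _ (eqmodX 2 (prod_dvdn_eqmod N))).
Qed.

End PrimeCharacteristic.

Lemma coef_sqr_odd (R : comNzRingType) (h : {poly R}) N :
  2 \in [pchar R] -> odd N -> (h ^+ 2)`_N = 0.
Proof.
move=> pchar2 oddN; rewrite expr2 coefM.
have [k Nk] : exists k, N.+1 = (k + k)%N.
  by exists N.+1./2; rewrite addnn -[LHS]odd_double_half /= oddN.
rewrite (bigID (fun i : 'I_N.+1 => i < k)%N) /=.
have -> : \sum_(i < N.+1 | ~~ (i < k)%N) h`_i * h`_(N - i)
        = \sum_(i < N.+1 | (i < k)%N) h`_i * h`_(N - i).
  rewrite (reindex_inj rev_ord_inj) /=; apply: eq_big => [i|i _] /=.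
    by have := ltn_ord i; lia.
  by have lti := ltn_ord i; rewrite subSS subKn 1?mulrC //; lia.
by rewrite -mulr2n -mulr_natr (pcharf0 pchar2) mulr0.
Qed.

Lemma dvd2_b2 l m N : odd N -> (2 %| b 2 l m N)%N.
Proof.
move=> oddN; have pchar2 : 2 \in [pchar 'F_2] by apply: pchar_Fp.
by rewrite (dvdn_pcharf pchar2) b_coef prod_geom_colored2 (coef_sqr_odd _ pchar2 oddN).
Qed.

Lemma dvd5_b2 m n : (4 %| m)%N -> (5 %| b 2 5 m (4 * n + 3))%N.
Proof.
move=> m4; set N := (4 * n + 3)%N.
have pchar5 : 5 \in [pchar 'F_5] by apply: pchar_Fp.
rewrite (dvdn_pcharf pchar5) b_coef prod_geom_colored2.
rewrite (eqmod_coef (prod_geom_sqr_eqmod pchar5 m N) (ltnSn N)).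
apply/eqP/coef_euler_pow8_mod4; last by rewrite /N; lia.
have C4 : supp_mod 4 0
    (\prod_(j <- iota 1 N | ~~ (5 %| j)%N && (m %| j)%N) (1 - 'X^j) : {poly 'F_5}).
  by apply: supp_mod_prod => j /andP [_ mj]; exact/supp_mod_1subXn/(dvdn_trans m4).
by have := supp_modX (k := 2) C4; rewrite mul0n mod0n.
Qed.

Local Close Scope ring_scope.

Theorem mainTheorem13 (t n : nat) :
  0 < t -> ~~ (5 %| t) -> b 2 5 (4 * t) (4 * n + 3) %% 10 = 0.
Proof.
move=> _ _; apply/eqP; rewrite -/(2 * 5 %| _) Gauss_dvd //.
by rewrite dvd2_b2 ?dvd5_b2 ?dvdn_mulr // oddD oddM.
Qed.
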